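(* Let $X$ and $Y$ be random variables taking values in the finite sets $\mathcal{X}=\{1,\dots,M\}$ and $\mathcal{Y}=\{1,\dots,N\}$, with joint distribution $P_{XY}$. For $\varepsilon\in[\mathsf{P}_{\mathsf{c}}(X),\mathsf{P}_{\mathsf{c}}(X|Y)]$ define $$\mathcal{h}(\varepsilon)=\sup\left\{\mathsf{P}_{\mathsf{c}}(Y|Z)\;:\;P_{Z|Y},\ X - Y - Z,\ \mathsf{P}_{\mathsf{c}}(X|Z)\le\varepsilon\right\},$$ where the supremum is over all channels $P_{Z|Y}$ into a finite alphabet $\mathcal{Z}$ such that $X,Y,Z$ form a Markov chain $X - Y - Z$. Then $\mathcal{h}$ is piecewise linear on $[\mathsf{P}_{\mathsf{c}}(X),\mathsf{P}_{\mathsf{c}}(X|Y)]$: there exist an integer $K\ge 1$ and thresholds $\mathsf{P}_{\mathsf{c}}(X)=\varepsilon_0\le\varepsilon_1\le\dots\le\varepsilon_K=\mathsf{P}_{\mathsf{c}}(X|Y)$ such that $\mathcal{h}$ is linear (affine) on $[\varepsilon_{i-1},\varepsilon_i]$ for each $i=1,\dots,K$.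
   Context: For a discrete random variable $X$, $\mathsf{P}_{\mathsf{c}}(X)=\max_x P_X(x)$ is the probability of correctly guessing $X$. For jointly distributed discrete $X,Z$, $\mathsf{P}_{\mathsf{c}}(X|Z)=\sum_{z}\max_{x}P_{XZ}(x,z)=\sum_z P_Z(z)\max_x P_{X|Z}(x|z)$ is the probability of correctly guessing $X$ from $Z$. $X - Y - Z$ means $X$ and $Z$ are conditionally independent given $Y$ (the channel $P_{Z|Y}$ acts on $Y$ only). *)

From HB Require Import structures.
From mathcomp Require Import all_boot all_order all_algebra.
From mathcomp Require Import boolp classical_sets reals.
Set Implicit Arguments. Unset Strict Implicit. Unset Printing Implicit Defensive.
Import Order.TTheory GRing.Theory Num.Theory.
Local Open Scope ring_scope.
Local Open Scope classical_set_scope.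

Section Defs.
Variable R : realType.
Variables M N : nat.

Definition is_joint (P : 'I_M -> 'I_N -> R) : Prop :=
  (forall x y, 0 <= P x y) /\ \sum_(x < M) \sum_(y < N) P x y = 1.

Definition is_channel (k : nat) (W : 'I_N -> 'I_k -> R) : Prop :=
  (forall y z, 0 <= W y z) /\ (forall y, \sum_(z < k) W y z = 1).

(* maximum of finitely many nonnegative reals (0 for the empty family) *)
Definition maxf (I : finType) (F : I -> R) : R := \big[Num.max/0]_(i : I) F i.

Definition PcX (P : 'I_M -> 'I_N -> R) : R :=
  maxf (fun x : 'I_M => \sum_(y < N) P x y).

Definition PcXgY (P : 'I_M -> 'I_N -> R) : R :=
  \sum_(y < N) maxf (fun x : 'I_M => P x y).

(* For the Markov chain X - Y - Z, P_XYZ(x,y,z) = P_XY(x,y) W(z|y). *)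
Definition PcXgZ (P : 'I_M -> 'I_N -> R) (k : nat) (W : 'I_N -> 'I_k -> R) : R :=
  \sum_(z < k) maxf (fun x : 'I_M => \sum_(y < N) P x y * W y z).

Definition PcYgZ (P : 'I_M -> 'I_N -> R) (k : nat) (W : 'I_N -> 'I_k -> R) : R :=
  \sum_(z < k) maxf (fun y : 'I_N => (\sum_(x < M) P x y) * W y z).

Definition hfun (P : 'I_M -> 'I_N -> R) (eps : R) : R :=
  sup [set r : R | exists (k : nat) (W : 'I_N -> 'I_k -> R),
         is_channel W /\ PcXgZ P W <= eps /\ r = PcYgZ P W].

End Defs.

From HB Require Import structures.
From mathcomp Require Import all_boot all_order all_algebra.
From mathcomp Require Import boolp classical_sets reals.
From mathcomp Require Import ring lra.
Set Implicit Arguments. Unset Strict Implicit. Unset Printing Implicit Defensive.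
Import Order.TTheory GRing.Theory Num.Theory.
Local Open Scope ring_scope.

(* Nothing is lost by letting the output of the channel be the pair (ŷ, x̂) of
   MAP guesses it leads to.  Feasibility of a pair (eps, v) then becomes the
   existence of a point w of a polyhedron cut out by finitely many linear
   inequalities in (eps, v, w).  Fourier-Motzkin elimination of w leaves finitely
   many linear inequalities in (eps, v) alone, so h(eps), the largest feasible v,
   is the minimum of finitely many affine functions of eps; such a minimum is
   affine between consecutive crossing points of these functions. *)

Lemma exists_between (R : realDomainType) (lo up : seq R) :
  {in lo & up, forall l u, l <= u} <->
  exists t, {in lo, forall l, l <= t} /\ {in up, forall u, t <= u}.
Proof.
split=> [|[t [lot tup]] l u /lot lt /tup tu]; last exact: le_trans lt tu.
elim: lo => [_|l lo IH lou].
  elim: up => [|u up [t [_ tup]]]; first by exists 0.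
  exists (Num.min u t); split=> // u'; rewrite inE ge_min => /predU1P[->|/tup->].
    by rewrite lexx.
  by rewrite orbT.
have [|t [lot tup]] := IH; first by move=> l' u' l'lo; apply: lou; rewrite inE l'lo orbT.
exists (Num.max l t); split=> [l'|u uup]; rewrite ?inE ?le_max.
  by case/predU1P=> [->|/lot->]; rewrite ?lexx ?orbT.
by rewrite ge_max tup // lou // mem_head.
Qed.

Section FourierMotzkin.
Variables (R : realFieldType) (V : finType).

Definition constraint := ((V -> R) * R)%type.

Definition lform (a x : V -> R) := \sum_v a v * x v.

Definition sat (x : V -> R) (c : constraint) : bool := lform c.1 x <= c.2.

Definition upd (x : V -> R) (u : V) (t : R) : V -> R :=
  fun v => if v == u then t else x v.

Lemma upd_id x u : upd x u (x u) = x.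
Proof. by apply: funext => v; rewrite /upd; case: eqP => // ->. Qed.

Lemma upd_upd x u t s : upd (upd x u t) u s = upd x u s.
Proof. by apply: funext => v; rewrite /upd; case: eqP. Qed.

Lemma lform_upd a x u t : lform a (upd x u t) = a u * t + lform a (upd x u 0).
Proof.
rewrite /lform (bigD1 u) //= [in RHS](bigD1 u) //= /upd eqxx mulr0 add0r.
by congr (_ + _); apply: eq_bigr => v /negPf ->.
Qed.

Lemma lform_split a x u : lform a x = a u * x u + lform a (upd x u 0).
Proof. by rewrite -{1}(upd_id x u) lform_upd. Qed.

(* The value of [x u] at which [c] is tight. *)
Definition bound (x : V -> R) (u : V) (c : constraint) : R :=
  (c.2 - lform c.1 (upd x u 0)) / c.1 u.

Lemma sat_upd0 x u t c : c.1 u = 0 -> sat (upd x u t) c = sat x c.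
Proof. by move=> cu0; rewrite /sat lform_upd [lform _ x](lform_split _ _ u) cu0 !mul0r. Qed.

Lemma sat_upd_gt0 x u t c : 0 < c.1 u -> sat (upd x u t) c = (t <= bound x u c).
Proof.
by move=> cu_gt0; rewrite /sat lform_upd ler_pdivlMr // -lerBrDr mulrC.
Qed.

Lemma sat_upd_lt0 x u t c : c.1 u < 0 -> sat (upd x u t) c = (bound x u c <= t).
Proof.
by move=> cu_lt0; rewrite /sat lform_upd ler_ndivrMr // -lerBrDr mulrC.
Qed.

(* Fourier-Motzkin combination of [p] and [q]: the coefficient of [u] cancels. *)
Definition comb (u : V) (p q : constraint) : constraint :=
  (fun v => p.1 u * q.1 v - q.1 u * p.1 v, p.1 u * q.2 - q.1 u * p.2).

Lemma sat_comb x u p q : 0 < p.1 u -> q.1 u < 0 ->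
  sat x (comb u p q) = (bound x u q <= bound x u p).
Proof.
move=> pu qu; rewrite /sat.
have -> : lform (comb u p q).1 x = p.1 u * lform q.1 x - q.1 u * lform p.1 x.
  rewrite /lform !mulr_sumr -sumrB; apply: eq_bigr => v _ /=; ring.
rewrite /bound /= !(lform_split _ x u) -subr_ge0.
set rp := lform p.1 _; set rq := lform q.1 _.
have -> : p.1 u * q.2 - q.1 u * p.2 - (p.1 u * (q.1 u * x u + rq) - q.1 u * (p.1 u * x u + rp))
          = p.1 u * q.1 u * ((q.2 - rq) / q.1 u - (p.2 - rp) / p.1 u).
  by field; rewrite lt0r_neq0 ?ltr0_neq0.
by rewrite nmulr_rge0 ?subr_le0 // pmulr_rlt0.
Qed.

Definition indep (u : V) (S : seq constraint) := [seq c <- S | c.1 u == 0].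
Definition upper (u : V) (S : seq constraint) := [seq c <- S | 0 < c.1 u].
Definition lower (u : V) (S : seq constraint) := [seq c <- S | c.1 u < 0].

Lemma sat_upd_split u S x t : all (sat (upd x u t)) S =
  [&& all (sat x) (indep u S), all (fun c => bound x u c <= t) (lower u S)
    & all (fun c => t <= bound x u c) (upper u S)].
Proof.
rewrite /indep /lower /upper !all_filter -!all_predI; apply: eq_all => c /=.
case: ltrgtP => [c_lt0|c_gt0|c_eq0] /=; rewrite ?andbT.
- by rewrite sat_upd_lt0.
- by rewrite sat_upd_gt0.
- by rewrite sat_upd0.
Qed.

Lemma sat_combsP u S x :
  all (sat x) [seq comb u p q | p <- upper u S, q <- lower u S] <->
  {in map (bound x u) (lower u S) & map (bound x u) (upper u S), forall l r, l <= r}.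
Proof.
split=> [/allP combs _ _ /mapP[q qlo ->] /mapP[p pup ->] | H].
  move: (pup) (qlo); rewrite /upper /lower !mem_filter => /andP[pu _] /andP[qu _].
  by rewrite -sat_comb // combs // allpairs_f.
apply/allP => _ /allpairsP[[p q] [/= pup qlo ->]].
move: (pup) (qlo); rewrite /upper /lower !mem_filter => /andP[pu _] /andP[qu _].
by rewrite sat_comb // H // map_f.
Qed.

Definition fm_step (u : V) (S : seq constraint) : seq constraint :=
  indep u S ++ [seq comb u p q | p <- upper u S, q <- lower u S].

Lemma fm_stepP u S x :
  all (sat x) (fm_step u S) <-> exists t, all (sat (upd x u t)) S.
Proof.
rewrite /fm_step all_cat; split.
  case/andP=> indepS /sat_combsP/exists_between[t [lot tup]]; exists t.
  rewrite sat_upd_split indepS; apply/and3P; split=> //; apply/allP => c cS.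
    by apply: lot; rewrite map_f.
  by apply: tup; rewrite map_f.
case=> t; rewrite sat_upd_split => /and3P[-> /allP lot /allP tup] /=.
apply/sat_combsP/exists_between; exists t.
by split=> _ /mapP[c cS ->]; [apply: lot | apply: tup].
Qed.

Fixpoint fm_elim (us : seq V) (S : seq constraint) : seq constraint :=
  if us is u :: us' then fm_elim us' (fm_step u S) else S.

Lemma fm_elimP us S x :
  all (sat x) (fm_elim us S) <->
  exists y, (forall v, v \notin us -> y v = x v) /\ all (sat y) S.
Proof.
elim: us S x => [|u us IH] S x /=.
  split=> [Sx|[y [yx Sy]]]; first by exists x.
  by have -> : x = y by apply: funext => v; rewrite yx.
rewrite IH; split=> [[y [yx /fm_stepP[t Sy]]] | [y [yx Sy]]].
  exists (upd y u t); split=> // v; rewrite inE negb_or => /andP[vu vus].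
  by rewrite /upd (negPf vu) yx.
exists (upd y u (x u)); split.
  move=> v vus; rewrite /upd; case: eqP => [-> //|/eqP vu].
  by rewrite yx // inE negb_or vu.
by apply/fm_stepP; exists (y u); rewrite upd_upd upd_id.
Qed.

End FourierMotzkin.

Section PiecewiseAffine.
Variable R : realFieldType.

Definition piecewise_affine (h : R -> R) (L U : R) : Prop :=
  exists (K : nat) (e : nat -> R),
    (1 <= K)%N /\ e 0%N = L /\ e K = U /\
    (forall i : nat, (i < K)%N -> e i <= e i.+1) /\
    (forall i : nat, (1 <= i <= K)%N ->
       exists a b : R, forall t : R, e i.-1 <= t -> t <= e i -> h t = a * t + b).

Lemma affine_le_across (f g : R * R) (lo hi t : R) :
  let r := (g.2 - f.2) / (f.1 - g.1) in r <= lo \/ hi <= r ->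
  lo <= t <= hi ->
  f.1 * ((lo + hi) / 2) + f.2 <= g.1 * ((lo + hi) / 2) + g.2 ->
  f.1 * t + f.2 <= g.1 * t + g.2.
Proof.
move=> r r_out /andP[lot thi]; set m := (lo + hi) / 2.
have m2 : m * 2 = lo + hi by rewrite /m divfK // pnatr_eq0.
have [d0|dn0] := eqVneq (f.1 - g.1) 0.
  by move/eqP: d0; rewrite subr_eq0 => /eqP->; lra.
have diff s : f.1 * s + f.2 - (g.1 * s + g.2) = (f.1 - g.1) * (s - r).
  by rewrite /r; field.
rewrite -subr_le0 diff => fg_m; rewrite -subr_le0 diff.
by move: dn0; rewrite neq_lt => /orP[] d0; case: r_out => hr; nra.
Qed.

Lemma sorted_nth_gap (s : seq R) (r : R) (i : nat) : sorted <=%R s -> r \in s ->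
  (0 < i < size s)%N -> r <= nth 0 s i.-1 \/ nth 0 s i <= r.
Proof.
move=> s_sorted r_s /andP[i_gt0 i_s]; rewrite -(nth_index 0 r_s).
have r_idx : (index r s < size s)%N by rewrite index_mem.
have mono := le_sorted_leq_nth 0 s_sorted.
have [ri|ir] := leqP (index r s) i.-1; [left|right]; apply: mono; rewrite ?inE //.
  exact: leq_ltn_trans (leq_pred i) i_s.
by rewrite -(prednK i_gt0).
Qed.

Lemma partition_avoiding (L U : R) (rs : seq R) : L <= U ->
  exists (K : nat) (e : nat -> R),
    (1 <= K)%N /\ e 0%N = L /\ e K = U /\
    (forall i : nat, (i < K)%N -> e i <= e i.+1) /\
    (forall i : nat, (i <= K)%N -> L <= e i <= U) /\
    (forall i : nat, (1 <= i <= K)%N -> {in rs, forall r, r <= e i.-1 \/ e i <= r}).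
Proof.
move=> LU; set s := sort <=%R (L :: U :: [seq r <- rs | L <= r <= U]).
have s_sorted : sorted <=%R s by apply: sort_sorted; apply: le_total.
have mono := le_sorted_leq_nth 0 s_sorted.
have Ks : ((size s).-1 < size s)%N by rewrite size_sort.
have nth_s i : (i < size s)%N -> L <= nth 0 s i <= U.
  move/(mem_nth 0); rewrite mem_sort !inE mem_filter => /or3P[/eqP->|/eqP->|/andP[]//].
    by rewrite lexx.
  by rewrite lexx andbT.
exists (size s).-1, (nth 0 s); split; first by rewrite size_sort.
split.
  have L_s : L \in s by rewrite mem_sort mem_head.
  apply/le_anti; rewrite (andP (nth_s 0%N (leq_ltn_trans (leq0n _) Ks))).1 andbT.
  by rewrite -[leRHS](nth_index 0 L_s); apply: mono; rewrite ?inE ?index_mem ?size_sort.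
split.
  have U_s : U \in s by rewrite mem_sort !inE eqxx orbT.
  apply/le_anti; rewrite (andP (nth_s _ Ks)).2 /=.
  rewrite -[leLHS](nth_index 0 U_s); apply: mono; rewrite ?inE ?index_mem //.
  by rewrite -ltnS prednK ?index_mem // size_sort.
split=> [i iK|].
  have iK1 : (i.+1 < size s)%N by apply: leq_ltn_trans iK Ks.
  by apply: mono; rewrite ?inE // ltnW.
split=> [i iK|i /andP[i_gt0 iK] r r_rs]; first by rewrite nth_s // (leq_ltn_trans iK).
have i_s : (i < size s)%N by rewrite (leq_ltn_trans iK).
have [/andP[Lr rU]|r_out] := boolP (L <= r <= U).
  by apply: sorted_nth_gap; rewrite ?i_gt0 // mem_sort !inE mem_filter Lr rU r_rs !orbT.
have := nth_s _ i_s; have := nth_s _ (leq_ltn_trans (leq_pred i) i_s).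
by move: r_out; rewrite negb_and -!ltNge => /orP[] ? /andP[? ?] /andP[? ?]; [left|right]; lra.
Qed.

Lemma piecewise_affine_min (h : R -> R) (fs : seq (R * R)) (L U : R) : L <= U ->
  (forall t, L <= t <= U ->
     {in fs, forall f, h t <= f.1 * t + f.2} /\ exists2 f, f \in fs & f.1 * t + f.2 <= h t) ->
  piecewise_affine h L U.
Proof.
move=> LU h_min; pose rs := [seq (g.2 - f.2) / (f.1 - g.1) | f <- fs, g <- fs].
have [K [e [K_gt0 [e0 [eK [e_mono [e_LU e_gap]]]]]]] := partition_avoiding rs LU.
exists K, e; do 4![split=> //]; move=> i iK; have /andP[i_gt0 i_leK] := iK.
set lo := e i.-1; set hi := e i.
have /andP[Llo _] : L <= lo <= U by rewrite e_LU // (leq_trans (leq_pred i)).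
have /andP[_ hiU] : L <= hi <= U by rewrite e_LU.
have lohi : lo <= hi by rewrite /lo /hi -{2}(prednK i_gt0) e_mono // prednK.
have m_LU : L <= (lo + hi) / 2 <= U by apply/andP; split; lra.
have [h_le_m [f ffs f_le_m]] := h_min _ m_LU.
exists f.1, f.2 => t lot thi.
have t_LU : L <= t <= U by apply/andP; split; lra.
have [h_le_t [g gfs g_le_t]] := h_min _ t_LU.
apply/le_anti; rewrite h_le_t //=; apply: le_trans g_le_t.
apply: affine_le_across.
  by apply: (e_gap i iK); apply/allpairsP; exists (f, g).
  by rewrite lot thi.
exact: le_trans f_le_m (h_le_m g gfs).
Qed.

End PiecewiseAffine.

Lemma seq_argmin (T : eqType) (d : Order.disp_t) (O : orderType d) (F : T -> O) (s : seq T) :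
  s != [::] -> exists2 x, x \in s & {in s, forall y, (F x <= F y)%O}.
Proof.
elim: s => // x s IH _; have [->|/IH[y ys ymin]] := eqVneq s [::].
  by exists x; rewrite ?mem_head // => y; rewrite inE => /eqP->.
have [xy|yx] := leP (F x) (F y).
  exists x; rewrite ?mem_head // => z; rewrite inE => /predU1P[->//|/ymin].
  exact: le_trans.
exists y; rewrite ?inE ?ys ?orbT // => z; rewrite inE => /predU1P[->|/ymin//].
exact: ltW.
Qed.

Section PlanarProjection.
Variable R : realFieldType.
Implicit Types (S : seq (constraint R bool)) (c : constraint R bool).

Definition point (e v : R) : bool -> R := fun b => if b then e else v.

Lemma sat_point c e v : sat (point e v) c = (c.1 true * e + c.1 false * v <= c.2).
Proof. by rewrite /sat /lform big_bool. Qed.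

Lemma sat_point_gt0 c e v : 0 < c.1 false ->
  sat (point e v) c = (v <= (- c.1 true / c.1 false) * e + c.2 / c.1 false).
Proof.
move=> c_gt0; have -> : - c.1 true / c.1 false * e + c.2 / c.1 false =
                       (c.2 - c.1 true * e) / c.1 false by field; rewrite gt_eqF.
by rewrite sat_point ler_pdivlMr //; apply/idP/idP => h; lra.
Qed.

Lemma sat_point_le0 c e v w : c.1 false <= 0 -> v <= w ->
  sat (point e v) c -> sat (point e w) c.
Proof. by move=> c_le0 vw; rewrite !sat_point => h; nra. Qed.

(* The constraints bounding [v] from above, as affine functions of [e]. *)
Definition caps S : seq (R * R) :=
  [seq (- c.1 true / c.1 false, c.2 / c.1 false) | c <- S & 0 < c.1 false].

Lemma lub_feasible_min S t u v0 :
  let feasible v := all (sat (point t v)) S in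
  feasible v0 -> (forall v, feasible v -> v <= u) ->
  (forall w, (forall v, feasible v -> v <= w) -> u <= w) ->
  {in caps S, forall f, u <= f.1 * t + f.2} /\
  exists2 f, f \in caps S & f.1 * t + f.2 <= u.
Proof.
move=> feasible feas_v0 u_ub u_lub.
have u_le_caps : {in caps S, forall f, u <= f.1 * t + f.2}.
  move=> f /mapP[c]; rewrite mem_filter => /andP[c_gt0 cS] ->.
  by apply: u_lub => v /allP/(_ c cS); rewrite sat_point_gt0.
have feasible_le w : v0 <= w -> {in S, forall c, 0 < c.1 false -> sat (point t w) c} ->
    feasible w.
  move=> v0w capsw; apply/allP => c cS; have [/capsw->//|c_le0] := ltrP 0 (c.1 false).
  exact: sat_point_le0 c_le0 v0w (allP feas_v0 c cS).
have cap_in c : c \in S -> 0 < c.1 false ->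
    (- c.1 true / c.1 false, c.2 / c.1 false) \in caps S.
  by move=> cS c_gt0; apply: map_f; rewrite mem_filter c_gt0.
have v0u := u_ub v0 feas_v0.
split=> //; have caps_neq0 : caps S != [::].
  apply/eqP => capsS0; suff : u + 1 <= u by lra.
  apply: u_ub; apply: feasible_le => [|c cS c_gt0]; first lra.
  by have := cap_in c cS c_gt0; rewrite capsS0.
have [f f_caps f_min] := seq_argmin (fun f => f.1 * t + f.2) caps_neq0.
exists f => //; apply: u_ub; apply: feasible_le => [|c cS c_gt0].
  exact: le_trans v0u (u_le_caps f f_caps).
by rewrite sat_point_gt0 //; apply: (f_min (_, _)); apply: cap_in.
Qed.

End PlanarProjection.

Section GuessingChannels.
Variables (R : realType) (M N : nat) (P : 'I_M -> 'I_N -> R).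
Hypothesis P_ge0 : forall x y, 0 <= P x y.

Local Notation guess := ('I_N * 'I_M)%type.
Implicit Types (w : 'I_N -> guess -> R) (g : guess).

Definition marginalY (y : 'I_N) : R := \sum_(x < M) P x y.

Lemma marginalY_ge0 y : 0 <= marginalY y.
Proof. by apply: sumr_ge0 => x _; apply: P_ge0. Qed.

(* A channel whose outputs [g = (ŷ, x̂)] are the guesses made from them:
   [guess_accX w] and [guess_accY w] are the probabilities that [x̂ = X]
   and [ŷ = Y]. *)
Definition guess_accX w : R := \sum_(y < N) \sum_g P g.2 y * w y g.
Definition guess_accY w : R := \sum_g marginalY g.1 * w g.1 g.

Definition guessing_feasible (eps v : R) w : Prop :=
  [/\ forall y g, 0 <= w y g,
      forall y, \sum_g w y g = 1,
      forall g x, \sum_y P x y * w y g <= \sum_y P g.2 y * w y g,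
      guess_accX w <= eps & v <= guess_accY w].

Lemma sum_fibers (k : nat) (f : 'I_k -> guess) (G : 'I_k -> guess -> R) :
  \sum_g \sum_(z | f z == g) G z g = \sum_z G z (f z).
Proof.
rewrite [RHS](partition_big f predT) //=; apply: eq_bigr => g _.
by apply: eq_bigr => z /eqP <-.
Qed.

(* Merging the outputs of [W] that lead to the same MAP guesses. *)
Lemma guessing_of_channel (x0 : 'I_M) (y0 : 'I_N) k (W : 'I_N -> 'I_k -> R) eps v :
  is_channel W -> PcXgZ P W <= eps -> v <= PcYgZ P W ->
  exists w, guessing_feasible eps v w.
Proof.
case=> W_ge0 W_sum PcX_le v_le.
pose yhat z := [arg max_(y > y0) marginalY y * W y z]%O.
pose xhat z := [arg max_(x > x0) \sum_y P x y * W y z]%O.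
have maxY z : maxf (fun y => marginalY y * W y z) = marginalY (yhat z) * W (yhat z) z.
  by apply: bigmax_eq_arg => // y _; rewrite mulr_ge0 ?marginalY_ge0.
have maxX z : maxf (fun x => \sum_y P x y * W y z) = \sum_y P (xhat z) y * W y z.
  by apply: bigmax_eq_arg => // x _; rewrite sumr_ge0 // => y _; rewrite mulr_ge0.
pose f z : guess := (yhat z, xhat z).
pose w y g := \sum_(z | f z == g) W y z.
have sum_w (G : 'I_N -> R) g :
    \sum_y G y * w y g = \sum_(z | f z == g) \sum_y G y * W y z.
  by under eq_bigr do rewrite mulr_sumr; rewrite exchange_big.
exists w; split.
- by move=> y g; apply: sumr_ge0.
- by move=> y; rewrite (sum_fibers f (fun z _ => W y z)).
- move=> g x; rewrite !sum_w; apply: ler_sum => z /eqP <- /=.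
  by rewrite -maxX; apply: le_bigmax.
- apply: le_trans PcX_le; rewrite /guess_accX exchange_big /=.
  under eq_bigr do rewrite sum_w.
  rewrite (sum_fibers f (fun z g => \sum_y P g.2 y * W y z)).
  by apply: ler_sum => z _; rewrite maxX.
- apply: le_trans v_le _; rewrite /guess_accY.
  under eq_bigr do rewrite mulr_sumr.
  rewrite (sum_fibers f (fun z g => marginalY g.1 * W g.1 z)).
  by apply: ler_sum => z _; rewrite maxY.
Qed.

Lemma channel_of_guessing eps v w : guessing_feasible eps v w ->
  exists k (W : 'I_N -> 'I_k -> R), [/\ is_channel W, PcXgZ P W <= eps & v <= PcYgZ P W].
Proof.
case=> w_ge0 w_sum w_map accX_le v_le.
have sum_enum (F : guess -> R) : \sum_(z < #|{: guess}|) F (enum_val z) = \sum_g F g.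
  by rewrite -(big_enum_val F); apply: eq_bigl => g; rewrite inE.
exists #|{: guess}|, (fun y z => w y (enum_val z)); split.
- by split=> [y z|y]; [apply: w_ge0 | rewrite sum_enum].
- apply: le_trans accX_le; rewrite /guess_accX exchange_big /= -sum_enum.
  apply: ler_sum => z _; apply: bigmax_le => [|x _]; last exact: w_map.
  by apply: sumr_ge0 => y _; rewrite mulr_ge0.
- apply: le_trans v_le _; rewrite /guess_accY -sum_enum.
  by apply: ler_sum => z _; apply: le_bigmax.
Qed.

End GuessingChannels.

Lemma sum_delta (R : pzSemiRingType) (I : finType) (i0 : I) (F : I -> R) :
  \sum_i (i == i0)%:R * F i = F i0.
Proof. by rewrite (bigD1 i0) //= eqxx mul1r big1 ?addr0 // => i /negPf->; rewrite mul0r. Qed.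

Lemma all_map_enumP (T : finType) (A : Type) (f : T -> A) (p : pred A) :
  reflect (forall t, p (f t)) (all p [seq f t | t <- enum T]).
Proof.
by rewrite all_map; apply: (iffP allP) => [H t | H t _]; [apply: H; rewrite mem_enum | apply: H].
Qed.

Section GuessingPolyhedron.
Variables (R : realType) (M N : nat) (P : 'I_M -> 'I_N -> R).

Local Notation guess := ('I_N * 'I_M)%type.
Local Notation var := (bool + 'I_N * guess)%type.
Implicit Types (x a : bool -> R) (w A : 'I_N -> guess -> R).

(* The variables of the polyhedron are [eps], [v] and the entries of [w]. *)
Definition embed a A : var -> R :=
  fun u => match u with inl b => a b | inr t => A t.1 t.2 end.

Lemma embedK (u : var -> R) : embed (u \o inl) (fun y g => u (inr (y, g))) = u.
Proof. by apply: funext => -[b|[]]. Qed.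

Lemma lform_embed a A x w :
  lform (embed a A) (embed x w) = lform a x + \sum_y \sum_g A y g * w y g.
Proof. by rewrite /lform big_sumType /= pair_big. Qed.

Definition lin a A (r : R) : constraint R var := (embed a A, r).

Lemma sat_lin a A r x w :
  sat (embed x w) (lin a A r) = (lform a x + \sum_y \sum_g A y g * w y g <= r).
Proof. by rewrite /sat lform_embed. Qed.

Lemma sat_lin0 A r x w :
  sat (embed x w) (lin (fun _ => 0) A r) = (\sum_y \sum_g A y g * w y g <= r).
Proof. by rewrite sat_lin /lform big1 ?add0r // => b _; rewrite mul0r. Qed.

Definition nonneg_cstr (t : 'I_N * guess) :=
  lin (fun _ => 0) (fun y g => - ((y == t.1)%:R * (g == t.2)%:R)) 0.

Lemma sat_nonneg t x w : sat (embed x w) (nonneg_cstr t) = (0 <= w t.1 t.2).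
Proof.
rewrite sat_lin0.
under eq_bigr => y _ do under eq_bigr => g _ do rewrite mulNr -mulrA.
under eq_bigr => y _ do rewrite sumrN -mulr_sumr sum_delta.
by rewrite sumrN sum_delta oppr_le0.
Qed.

Definition row_le_cstr (y0 : 'I_N) := lin (fun _ => 0) (fun y _ => (y == y0)%:R) 1.
Definition row_ge_cstr (y0 : 'I_N) := lin (fun _ => 0) (fun y _ => - (y == y0)%:R) (-1).

Lemma sat_row_le y0 x w : sat (embed x w) (row_le_cstr y0) = (\sum_g w y0 g <= 1).
Proof. by rewrite sat_lin0; under eq_bigr do rewrite -mulr_sumr; rewrite sum_delta. Qed.

Lemma sat_row_ge y0 x w : sat (embed x w) (row_ge_cstr y0) = (1 <= \sum_g w y0 g).
Proof.
rewrite sat_lin0; under eq_bigr do rewrite -mulr_sumr.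
by under eq_bigr do rewrite mulNr; rewrite sumrN sum_delta lerN2.
Qed.

Definition map_cstr (t : guess * 'I_M) :=
  lin (fun _ => 0) (fun y g => (g == t.1)%:R * (P t.2 y - P t.1.2 y)) 0.

Lemma sat_map t x w : sat (embed x w) (map_cstr t) =
  (\sum_y P t.2 y * w y t.1 <= \sum_y P t.1.2 y * w y t.1).
Proof.
rewrite sat_lin0 -[RHS]subr_le0 -sumrB; congr (_ <= _); apply: eq_bigr => y _.
under eq_bigr do rewrite mulrAC -mulrA; rewrite sum_delta; ring.
Qed.

Definition accX_cstr := lin (point (-1) 0) (fun y g => P g.2 y) 0.

Lemma sat_accX eps v w :
  sat (embed (point eps v) w) accX_cstr = (guess_accX P w <= eps).
Proof. by rewrite sat_lin /lform big_bool /= mul0r addr0 mulN1r addrC subr_le0. Qed.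

Definition accY_cstr :=
  lin (point 0 1) (fun y g => - ((g.1 == y)%:R * marginalY P y)) 0.

Lemma sat_accY eps v w :
  sat (embed (point eps v) w) accY_cstr = (v <= guess_accY P w).
Proof.
rewrite sat_lin /lform big_bool /= mul0r add0r mul1r.
under eq_bigr do under eq_bigr do rewrite mulNr.
under eq_bigr do rewrite sumrN; rewrite sumrN subr_le0 exchange_big /=.
congr (_ <= _); apply: eq_bigr => g _.
by under eq_bigr do rewrite -mulrA eq_sym; rewrite sum_delta.
Qed.

Definition guessing_constraints : seq (constraint R var) :=
  [seq nonneg_cstr t | t <- enum {: 'I_N * guess}] ++
  [seq row_le_cstr y | y <- enum 'I_N] ++ [seq row_ge_cstr y | y <- enum 'I_N] ++
  [seq map_cstr t | t <- enum {: guess * 'I_M}] ++ [:: accX_cstr; accY_cstr].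

Lemma guessing_constraintsP eps v w :
  all (sat (embed (point eps v) w)) guessing_constraints <-> guessing_feasible P eps v w.
Proof.
rewrite /guessing_constraints !all_cat /= sat_accX sat_accY andbT.
split=> [|[w_ge0 w_sum w_map -> ->]]; last first.
  by apply/and5P; split=> //; apply/all_map_enumP => ?;
    rewrite ?sat_nonneg ?sat_row_le ?sat_row_ge ?sat_map ?w_sum.
case/and5P=> /all_map_enumP w_ge0 /all_map_enumP le1 /all_map_enumP ge1 /all_map_enumP w_map.
case/andP=> accX accY; split=> //.
  - by move=> y g; have := w_ge0 (y, g); rewrite sat_nonneg.
  - by move=> y; apply/le_anti; have := ge1 y; have := le1 y; rewrite sat_row_le sat_row_ge => ->.
  - by move=> g x; have := w_map (g, x); rewrite sat_map.
Qed.

Definition tradeoff_constraints : seq (constraint R bool) :=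
  [seq (c.1 \o inl, c.2) |
   c <- fm_elim [seq inr t | t <- enum {: 'I_N * guess}] guessing_constraints].

Lemma tradeoff_constraintsP eps v :
  all (sat (point eps v)) tradeoff_constraints <-> exists w, guessing_feasible P eps v w.
Proof.
have sat_proj (c : constraint R var) :
    sat (point eps v) (c.1 \o inl, c.2) = sat (embed (point eps v) (fun _ _ => 0)) c.
  rewrite /sat -[in RHS](embedK c.1) lform_embed big1 ?addr0 // => y _.
  by rewrite big1 // => g _; rewrite mulr0.
rewrite all_map (eq_all sat_proj) fm_elimP; split=> [[u [u_eq u_sat]] | [w]].
  exists (fun y g => u (inr (y, g))); apply/guessing_constraintsP.
  suff <- : u \o inl = point eps v by rewrite embedK.
  by apply: funext => b /=; rewrite u_eq //; apply/mapP => -[].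
move/guessing_constraintsP => w_sat; exists (embed (point eps v) w); split=> // -[b|t] //.
by rewrite map_f // mem_enum.
Qed.

End GuessingPolyhedron.

Section TradeoffFunction.
Variables (R : realType) (M N : nat) (P : 'I_M -> 'I_N -> R).
Hypotheses (P_ge0 : forall x y, 0 <= P x y) (P_sum : \sum_(x < M) \sum_(y < N) P x y = 1).

Local Open Scope classical_set_scope.

Definition achievable (eps : R) : set R :=
  [set r | exists k (W : 'I_N -> 'I_k -> R),
     is_channel W /\ PcXgZ P W <= eps /\ r = PcYgZ P W].

Lemma tradeoff_feasibleP (x0 : 'I_M) (y0 : 'I_N) eps v :
  all (sat (point eps v)) (tradeoff_constraints P) <-> exists2 r, achievable eps r & v <= r.
Proof.
rewrite tradeoff_constraintsP; split=> [[w] | [r [k [W [W_ch [PcX_le ->]]]] v_le]].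
  case/(channel_of_guessing P_ge0)=> k [W [W_ch PcX_le v_le]].
  by exists (PcYgZ P W); first exists k, W.
exact: (guessing_of_channel P_ge0 x0 y0 W_ch PcX_le v_le).
Qed.

Lemma PcYgZ_le1 k (W : 'I_N -> 'I_k -> R) : is_channel W -> PcYgZ P W <= 1.
Proof.
case=> W_ge0 W_sum; have PYW_ge0 y z : 0 <= marginalY P y * W y z.
  by rewrite mulr_ge0 ?marginalY_ge0.
apply: (@le_trans _ _ (\sum_(z < k) \sum_y marginalY P y * W y z)).
  apply: ler_sum => z _; apply: bigmax_le => [|y _]; first exact: sumr_ge0.
  by rewrite (bigD1 y) //= lerDl sumr_ge0.
rewrite exchange_big /=; under eq_bigr do rewrite -mulr_sumr W_sum mulr1.
by rewrite /marginalY exchange_big /= P_sum.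
Qed.

Definition const_channel : 'I_N -> 'I_1 -> R := fun _ _ => 1.

Lemma const_channel_is_channel : is_channel const_channel.
Proof. by split=> // y; rewrite big_ord1. Qed.

Lemma PcXgZ_const : PcXgZ P const_channel = PcX P.
Proof.
rewrite /PcXgZ big_ord1 /PcX; congr maxf; apply: funext => x.
by apply: eq_bigr => y _; rewrite mulr1.
Qed.

Lemma PcX_le_PcXgY : PcX P <= PcXgY P.
Proof.
apply: bigmax_le => [|x _]; first by apply: sumr_ge0 => y _; apply: bigmax_ge_id.
by apply: ler_sum => y _; apply: le_bigmax.
Qed.

Lemma hfun_lub (x0 : 'I_M) (y0 : 'I_N) t : PcX P <= t ->
  let feasible v := all (sat (point t v)) (tradeoff_constraints P) in
  [/\ feasible (PcYgZ P const_channel),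
      forall v, feasible v -> v <= hfun P t &
      forall u, (forall v, feasible v -> v <= u) -> hfun P t <= u].
Proof.
move=> PcX_le feasible.
have ach_const : achievable t (PcYgZ P const_channel).
  by exists 1%N, const_channel; rewrite PcXgZ_const; split=> //; apply: const_channel_is_channel.
have ach_sup : has_sup (achievable t).
  split; first by exists (PcYgZ P const_channel).
  by exists 1 => r [k [W [W_ch [_ ->]]]]; apply: PcYgZ_le1.
split.
- by apply/(tradeoff_feasibleP x0 y0); exists (PcYgZ P const_channel).
- move=> v /(tradeoff_feasibleP x0 y0)[r r_ach v_le].
  exact: le_trans v_le (sup_upper_bound ach_sup r_ach).
- move=> u u_ub; apply: ge_sup => [|r r_ach]; first by exists (PcYgZ P const_channel).
  by apply: u_ub; apply/(tradeoff_feasibleP x0 y0); exists r.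
Qed.

End TradeoffFunction.

Lemma joint_dims_gt0 (R : realType) (M N : nat) (P : 'I_M -> 'I_N -> R) :
  is_joint P -> (0 < M)%N /\ (0 < N)%N.
Proof.
case=> _; case: M P => [|M] P; first by rewrite big_ord0 => /eqP; rewrite eq_sym oner_eq0.
case: N P => [|N] P //; rewrite big1 => [/eqP|x _]; first by rewrite eq_sym oner_eq0.
exact: big_ord0.
Qed.

Theorem theorem1 (R : realType) (M N : nat) (P : 'I_M -> 'I_N -> R) :
  is_joint P ->
  exists (K : nat) (e : nat -> R),
    (1 <= K)%N /\ e 0%N = PcX P /\ e K = PcXgY P /\
    (forall i : nat, (i < K)%N -> e i <= e i.+1) /\
    (forall i : nat, (1 <= i <= K)%N ->
       exists a b : R, forall t : R, e i.-1 <= t -> t <= e i ->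
         hfun P t = a * t + b).
Proof.
move=> P_joint; have [M_gt0 N_gt0] := joint_dims_gt0 P_joint.
case: P_joint => P_ge0 P_sum.
apply: (piecewise_affine_min (fs := caps (tradeoff_constraints P)) (PcX_le_PcXgY P)).
move=> t /andP[PcX_le _].
have [feas_const ub lub] := hfun_lub P_ge0 P_sum (Ordinal M_gt0) (Ordinal N_gt0) PcX_le.
exact: lub_feasible_min feas_const ub lub.
Qed.
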